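(* Let $G$ be a LEF-group and let $\mathcal{C}$ be a concrete category with a terminal object and fibered products. Let $(A,a)$ be a pointed object of $\mathcal{C}$ such that $A$ is finite product Hopfian. If $\tau\in CA_{\mathcal{C}}(G,(A,a))$ is reversible, then $\tau^{-1}\in CA_{\mathcal{C}}(G,(A,a))$.
   Context: A group $G$ is LEF if every finite subset $S\subset G$ admits an injective map $\varphi\colon S\to H$ into some finite group $H$ with $\varphi(ab)=\varphi(a)\varphi(b)$ whenever $a,b,ab\in S$. A concrete category is a category with a faithful functor to sets; objects and morphisms are identified with their underlying sets and maps. In a category, an object $A$ is Hopfian if every epimorphism $A\to A$ is an automorphism, co-Hopfian if every monomorphism $A\to A$ is an automorphism; $A$ is finite product Hopfian (resp. co-Hopfian) if $A^n$ is Hopfian (resp. co-Hopfian) for all $n\in\mathbb{N}$. For finite $E$, $A^E$ is the product over the terminal object $\varepsilon$ of copies of $A$ indexed by $E$. A pointed object is $(A,a)$ with $a\colon\varepsilon\to A$; a pointed morphism $(A,a)\to(B,b)$ is $f\colon A\to B$ with $f\circ a=b$; $A^E$ is pointed by $a^E$ with all components $a$. $G$ acts on $A^G$ by $(gc)(h)=c(g^{-1}h)$; a cellular automaton is a map $\tau\colon A^G\to A^G$ with $(\tau(c))(g)=\mu((g^{-1}c)|_M)$ for some finite $M\subset G$ and map $\mu\colon A^M\to A$; it is reversible if it is bijective and its inverse is a cellular automaton. $CA_{\mathcal{C}}(G,(A,a))$ is the set of cellular automata admitting, for some finite memory set $M$, a local defining map that is the underlying map of a pointed morphism $(A^M,a^M)\to(A,a)$.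 *)

From mathcomp Require Import all_boot all_fingroup.
From Stdlib Require Import List.

Set Implicit Arguments.
Unset Strict Implicit.
Unset Printing Implicit Defensive.

Record Grp := MkGrp {
  gcar :> Type;
  gmul : gcar -> gcar -> gcar;
  gone : gcar;
  ginv : gcar -> gcar;
  gmulA : forall x y z, gmul x (gmul y z) = gmul (gmul x y) z;
  gmul1x : forall x, gmul gone x = x;
  gmulx1 : forall x, gmul x gone = x;
  gmulVx : forall x, gmul (ginv x) x = gone;
  gmulxV : forall x, gmul x (ginv x) = gone
}.

Definition LEF (G : Grp) : Prop :=
  forall S : list G, exists (H : finGroupType) (phi : G -> H),
    (forall x y, In x S -> In y S -> phi x = phi y -> x = y) /\
    (forall x y, In x S -> In y S -> In (gmul x y) S ->
       phi (gmul x y) = (phi x * phi y)%g).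

Record category := Category {
  Ob : Type;
  Hom : Ob -> Ob -> Type;
  idm : forall X, Hom X X;
  comp : forall X Y Z, Hom Y Z -> Hom X Y -> Hom X Z;
  compA : forall X Y Z W (h : Hom Z W) (g : Hom Y Z) (f : Hom X Y),
      comp h (comp g f) = comp (comp h g) f;
  comp_id_l : forall X Y (f : Hom X Y), comp (idm Y) f = f;
  comp_id_r : forall X Y (f : Hom X Y), comp f (idm X) = f
}.
Arguments comp {c X Y Z}.
Arguments idm {c}.

Record concrete_category := Concrete {
  cat :> category;
  U : Ob cat -> Type;
  Umap : forall X Y, Hom X Y -> U X -> U Y;
  Umap_id : forall X x, Umap (idm X) x = x;
  Umap_comp : forall X Y Z (g : Hom Y Z) (f : Hom X Y) x,
      Umap (comp g f) x = Umap g (Umap f x);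
  Umap_faithful : forall X Y (f g : Hom X Y), (forall x, Umap f x = Umap g x) -> f = g
}.
Arguments U {c}.
Arguments Umap {c X Y}.

Section CatDefs.
Variable C : category.

Definition is_terminal (T : Ob C) : Prop :=
  forall X : Ob C, exists f : Hom X T, forall g : Hom X T, g = f.

Definition has_fibered_products : Prop :=
  forall (X Y Z : Ob C) (f : Hom X Z) (g : Hom Y Z),
  exists (P : Ob C) (p1 : Hom P X) (p2 : Hom P Y),
    comp f p1 = comp g p2 /\
    forall (Q : Ob C) (q1 : Hom Q X) (q2 : Hom Q Y), comp f q1 = comp g q2 ->
      exists u : Hom Q P, (comp p1 u = q1 /\ comp p2 u = q2) /\
        forall v : Hom Q P, comp p1 v = q1 -> comp p2 v = q2 -> v = u.

Definition is_power (A : Ob C) (E : Type) (P : Ob C) (proj : E -> Hom P A) : Prop :=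
  forall (X : Ob C) (h : E -> Hom X A),
    exists u : Hom X P, (forall i, comp (proj i) u = h i) /\
      forall v : Hom X P, (forall i, comp (proj i) v = h i) -> v = u.

Definition is_epi (X Y : Ob C) (f : Hom X Y) : Prop :=
  forall (Z : Ob C) (g h : Hom Y Z), comp g f = comp h f -> g = h.
Definition is_mono (X Y : Ob C) (f : Hom X Y) : Prop :=
  forall (Z : Ob C) (g h : Hom Z X), comp f g = comp f h -> g = h.
Definition is_automorphism (X : Ob C) (f : Hom X X) : Prop :=
  exists g : Hom X X, comp g f = idm X /\ comp f g = idm X.

Definition Hopfian (A : Ob C) : Prop :=
  forall f : Hom A A, is_epi f -> is_automorphism f.

Definition finite_product_Hopfian (A : Ob C) : Prop :=
  forall (n : nat) (P : Ob C) (proj : 'I_n -> Hom P A),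
    @is_power A 'I_n P proj -> Hopfian P.
End CatDefs.
Arguments is_power {C} A {E P} proj.
Arguments is_terminal {C} T.
Arguments Hopfian {C} A.
Arguments finite_product_Hopfian {C} A.

(* Identification of the underlying set of A^E with the set of maps E -> U A:
   the forgetful functor sends finite powers to cartesian powers. *)
Definition preserves_finite_powers (C : concrete_category) : Prop :=
  forall (A : Ob C) (E : finType) (P : Ob C) (proj : E -> Hom P A),
    is_power A proj ->
    (forall x y : U P, (forall i, Umap (proj i) x = Umap (proj i) y) -> x = y) /\
    (forall h : E -> U A, exists x : U P, forall i, Umap (proj i) x = h i).

(* A finite memory set M ⊂ G is encoded by a finType E and an injection e : E -> G
   (M = image of e); A^M is then E -> A.  Configurations are maps G -> A, and
   (g^{-1} c)(h) = c (g h). *)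
Definition is_CA (G : Grp) (A : Type) (tau : (G -> A) -> (G -> A)) : Prop :=
  exists (E : finType) (e : E -> G) (mu : (E -> A) -> A),
    injective e /\
    forall c g, tau c g = mu (fun i => c (gmul g (e i))).

(* CA_C(G,(A,a)), where eps is the terminal object and a : eps -> A. *)
Definition CA_C (G : Grp) (C : concrete_category) (eps : Ob C) (A : Ob C)
    (a : Hom eps A) (tau : (G -> U A) -> (G -> U A)) : Prop :=
  exists (E : finType) (e : E -> G) (P : Ob C) (proj : E -> Hom P A) (f : Hom P A),
    [/\ injective e,
        is_power A proj,
        (* f is pointed: f o a^E = a, where a^E : eps -> A^E has all components a *)
        (forall aE : Hom eps P, (forall i, comp (proj i) aE = a) -> comp f aE = a) &
        (* the underlying map of f is a local defining map of tau *)
        forall c g (x : U P),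
          (forall i, Umap (proj i) x = c (gmul g (e i))) -> tau c g = Umap f x].

From Pilot Require Import Defs.
From mathcomp Require Import all_boot all_fingroup.
From Stdlib Require Import List FunctionalExtensionality ClassicalEpsilon.

(* Since G is LEF, the finitely many group relations among the memory sets of
   tau and sigma are realised in a finite group H.  Transporting the local rules
   along this partial morphism yields morphisms tauH : A^H -> A^H and a map
   sigmaH on the underlying set with tauH o sigmaH = id.  So tauH is surjective,
   hence epi, hence an automorphism because A^H is Hopfian, and sigmaH is the
   underlying map of its inverse morphism.  Reading off the coordinate at 1 of
   sigmaH, precomposed with the embedding of A^E' into A^H, gives a pointed
   local defining morphism for sigma. *)

Set Implicit Arguments.
Unset Strict Implicit.
Unset Printing Implicit Defensive.

Local Notation cmp := Defs.comp.

Section Powers.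
Variables (C : category) (A : Ob C).

Lemma power_morph_eq (E : Type) (P : Ob C) (proj : E -> Hom P A) (X : Ob C)
    (u v : Hom X P) :
  is_power A proj -> (forall i, cmp (proj i) u = cmp (proj i) v) -> u = v.
Proof.
move=> powP uv; have [w [_ w_uniq]] := powP X (fun i => cmp (proj i) v).
by rewrite (w_uniq u uv) (w_uniq v (fun i => erefl)).
Qed.

Definition power_lift (E : Type) (P : Ob C) (proj : E -> Hom P A)
    (powP : is_power A proj) (X : Ob C) (h : E -> Hom X A) : Hom X P :=
  proj1_sig (constructive_indefinite_description _ (powP X h)).

Lemma power_liftE (E : Type) (P : Ob C) (proj : E -> Hom P A)
    (powP : is_power A proj) (X : Ob C) (h : E -> Hom X A) i :
  cmp (proj i) (power_lift powP h) = h i.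
Proof.
rewrite /power_lift; case: constructive_indefinite_description => u [uh _] /=.
exact: uh.
Qed.

Lemma is_power_reindex (E E' : Type) (P : Ob C) (proj : E -> Hom P A)
    (b : E' -> E) :
  bijective b -> is_power A proj -> is_power A (fun j => proj (b j)).
Proof.
move=> [b' bK b'K] powP X h; have [u [uh u_uniq]] := powP X (fun i => h (b' i)).
exists u; split=> [j|v vh]; first by rewrite uh bK.
by apply: u_uniq => i; have := vh (b' i); rewrite b'K.
Qed.

Lemma terminal_morph_eq (T X : Ob C) (u v : Hom X T) : is_terminal T -> u = v.
Proof. by move=> /(_ X) [t tu]; rewrite (tu u) (tu v). Qed.

Definition terminal_morph (T : Ob C) (T_terminal : is_terminal T) (X : Ob C) :
    Hom X T :=
  proj1_sig (constructive_indefinite_description _ (T_terminal X)).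

Definition snoc_proj (P Q : Ob C) n (proj : 'I_n -> Hom P A) (p1 : Hom Q P)
    (p2 : Hom Q A) (i : 'I_n.+1) : Hom Q A :=
  if unlift ord_max i is Some j then cmp (proj j) p1 else p2.

(* A^(n+1) is the fibered product of A^n and A over the terminal object; A^0 is
   the terminal object, and a only serves to write its (vacuous) projections. *)
Lemma power_ord_exists (eps : Ob C) (a : Hom eps A) :
  is_terminal eps -> has_fibered_products C ->
  forall n, exists (P : Ob C) (proj : 'I_n -> Hom P A), is_power A proj.
Proof.
move=> eps_terminal pullback; elim=> [|n [P [proj powP]]].
  exists eps, (fun _ => a) => X h; have [t tu] := eps_terminal X.
  by exists t; split=> [[]|v _]; last exact: tu.
have [bP _] := eps_terminal P; have [bA _] := eps_terminal A.
have [Q [p1 [p2 [_ Q_univ]]]] := pullback P A eps bP bA.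
exists Q, (snoc_proj proj p1 p2) => X h.
have [u1 [u1h u1_uniq]] := powP X (fun j => h (lift ord_max j)).
have [|u [[u_p1 u_p2] u_uniq]] := Q_univ X u1 (h ord_max).
  exact: terminal_morph_eq.
exists u; split=> [i|v vh].
  by rewrite /snoc_proj; case: unliftP => [j ->|->] //; rewrite -Defs.compA u_p1.
apply: u_uniq; last by have := vh ord_max; rewrite /snoc_proj unlift_none.
apply: u1_uniq => j; rewrite Defs.compA.
by have := vh (lift ord_max j); rewrite /snoc_proj liftK.
Qed.

Lemma power_exists (eps : Ob C) (a : Hom eps A) (E : finType) :
  is_terminal eps -> has_fibered_products C ->
  exists (P : Ob C) (proj : E -> Hom P A), is_power A proj.
Proof.
move=> eps_terminal pullback.
have [P [proj powP]] := power_ord_exists a eps_terminal pullback #|E|.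
by exists P, (fun i => proj (enum_rank i)); exact: (is_power_reindex (@enum_rank_bij E) powP).
Qed.

Lemma finite_product_Hopfian_power (E : finType) (P : Ob C)
    (proj : E -> Hom P A) :
  finite_product_Hopfian A -> is_power A proj -> Hopfian P.
Proof.
move=> A_Hopfian powP.
exact: (A_Hopfian _ _ _ (is_power_reindex (@enum_val_bij E) powP)).
Qed.

End Powers.

Section Concrete.
Variable C : concrete_category.

Definition power_point (A : Ob C) (E : finType) (P : Ob C) (proj : E -> Hom P A)
    (pres : preserves_finite_powers C) (powP : is_power A proj) (h : E -> U A) :
    U P :=
  proj1_sig (constructive_indefinite_description _ (proj2 (pres _ _ _ _ powP) h)).

Lemma power_pointE (A : Ob C) (E : finType) (P : Ob C) (proj : E -> Hom P A)
    (pres : preserves_finite_powers C) (powP : is_power A proj) h i :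
  Umap (proj i) (power_point pres powP h) = h i.
Proof. by rewrite /power_point; case: constructive_indefinite_description. Qed.

Lemma surjective_epi (X Y : Ob C) (f : Hom X Y) :
  (forall y, exists x, Umap f x = y) -> is_epi f.
Proof.
move=> f_surj Z g h gf_hf; apply: Umap_faithful => y.
by have [x <-] := f_surj y; rewrite -!Umap_comp gf_hf.
Qed.

(* t is surjective, hence epi, hence an automorphism; its inverse is then s. *)
Lemma Hopfian_section_morph (P : Ob C) (t : Hom P P) (s : U P -> U P) :
  Hopfian P -> (forall y, Umap t (s y) = y) ->
  exists t' : Hom P P, cmp t' t = Defs.idm P /\ forall y, Umap t' y = s y.
Proof.
move=> P_Hopfian sK.
have [|t' [t'K _]] := P_Hopfian t; first by apply: surjective_epi => y; exists (s y).
by exists t'; split=> // y; rewrite -{1}[y]sK -Umap_comp t'K Umap_id.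
Qed.

End Concrete.

Lemma In_enum (T : finType) (x : T) : List.In x (enum T).
Proof.
have : x \in enum T by rewrite mem_enum.
by elim: (enum T) => //= y s IH; rewrite inE => /orP[/eqP->|/IH]; [left|right].
Qed.

(* Apply LEF to S = {1} u e(E) u e'(E') u e(E)e'(E'). *)
Lemma LEF_local_morph (G : Grp) (E E' : finType) (e : E -> G) (e' : E' -> G) :
  LEF G -> injective e' ->
  exists (H : finGroupType) (phi : G -> H),
    [/\ phi (gone G) = 1%g,
        forall i j, phi (gmul (e i) (e' j)) = (phi (e i) * phi (e' j))%g &
        injective (fun j => phi (e' j))].
Proof.
move=> G_LEF e'_inj.
pose S := gone G :: List.map e (enum E) ++ List.map e' (enum E') ++
  List.map (fun p => gmul (e p.1) (e' p.2)) (list_prod (enum E) (enum E')).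
have [H [phi [phi_inj phiM]]] := G_LEF S.
have S1 : List.In (gone G) S by left.
have Se i : List.In (e i) S.
  by right; apply/in_or_app; left; apply/in_map/In_enum.
have Se' j : List.In (e' j) S.
  by right; apply/in_or_app; right; apply/in_or_app; left; apply/in_map/In_enum.
have See i j : List.In (gmul (e i) (e' j)) S.
  right; do 2![apply/in_or_app; right]; apply: (in_map _ _ (i, j)).
  by apply/in_prod; apply: In_enum.
exists H, phi; split=> [|i j|j k /phi_inj].
- have := phiM _ _ S1 S1; rewrite gmul1x => /(_ S1) phi11.
  by apply: (@mulgI _ (phi (gone G))); rewrite mulg1 -phi11.
- exact: phiM.
- by move=> /(_ (Se' j) (Se' k)); apply: e'_inj.
Qed.

Section InverseLocalRule.
Variables (G : Grp) (C : concrete_category) (eps A : Ob C) (a : Hom eps A).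
Hypotheses (eps_terminal : is_terminal eps) (pres : preserves_finite_powers C).
Variables (tau sigma : (G -> U A) -> (G -> U A)).
Hypothesis sigmaK : forall c, tau (sigma c) = c.

Variables (E : finType) (e : E -> G) (P : Ob C) (proj : E -> Hom P A).
Variable f : Hom P A.
Hypothesis powP : is_power A proj.
Hypothesis f_pointed :
  forall aE : Hom eps P, (forall i, cmp (proj i) aE = a) -> cmp f aE = a.
Hypothesis tau_local : forall c g (x : U P),
  (forall i, Umap (proj i) x = c (gmul g (e i))) -> tau c g = Umap f x.

Variables (E' : finType) (e' : E' -> G) (nu : (E' -> U A) -> U A).
Hypothesis e'_inj : injective e'.
Hypothesis sigma_local : forall c g, sigma c g = nu (fun j => c (gmul g (e' j))).

Variables (H : finGroupType) (phi : G -> H).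
Hypothesis phi1 : phi (gone G) = 1%g.
Hypothesis phiM : forall i j, phi (gmul (e i) (e' j)) = (phi (e i) * phi (e' j))%g.
Hypothesis phi_e'_inj : injective (fun j => phi (e' j)).

Variables (Q : Ob C) (projQ : H -> Hom Q A).
Hypotheses (powQ : is_power A projQ) (Q_Hopfian : Hopfian Q).

Local Notation "y .[ h ]" := (Umap (projQ h) y).

(* Q = A^H; phi transports the memory sets of tau and sigma into H, giving
   cellular automata tauH and sigmaH on the finite group H. *)
Definition window (h : H) : Hom Q P :=
  power_lift powP (fun k => projQ (h * phi (e k))%g).

Definition tauH : Hom Q Q := power_lift powQ (fun h => cmp f (window h)).

Definition sigmaH (y : U Q) : U Q :=
  power_point pres powQ (fun h => nu (fun j => y.[h * phi (e' j)]%g)).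

Lemma tauH_pointed (aQ : Hom eps Q) :
  (forall h, cmp (projQ h) aQ = a) -> cmp tauH aQ = aQ.
Proof.
move=> aQ_a; apply: (power_morph_eq powQ) => h.
rewrite aQ_a Defs.compA power_liftE -Defs.compA; apply: f_pointed => k.
by rewrite Defs.compA power_liftE aQ_a.
Qed.

(* The identity tau (sigma c) = c at the neutral element, for the configuration
   c g := y.[h phi(g)], is the identity tauH (sigmaH y) = y at h. *)
Lemma sigmaHK y : Umap tauH (sigmaH y) = y.
Proof.
have [Q_ext _] := pres powQ; apply: Q_ext => h.
pose c g := y.[h * phi g]%g.
rewrite -Umap_comp power_liftE Umap_comp.
rewrite -(tau_local (c := sigma c) (g := gone G)); last first.
  move=> k; rewrite -Umap_comp power_liftE power_pointE sigma_local gmul1x.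
  by congr nu; apply: functional_extensionality => j; rewrite /c phiM mulgA.
by rewrite sigmaK /c phi1 mulg1.
Qed.

Variables (Pm : Ob C) (projm : E' -> Hom Pm A).
Hypothesis powPm : is_power A projm.

(* The embedding A^E' -> A^H along phi o e', filled with the point a elsewhere. *)
Definition spread : Hom Pm Q := power_lift powQ (fun h =>
  if [pick j | phi (e' j) == h] is Some j then projm j
  else cmp a (terminal_morph eps_terminal Pm)).

Lemma spread_pointed (aE : Hom eps Pm) :
  (forall j, cmp (projm j) aE = a) -> forall h, cmp (projQ h) (cmp spread aE) = a.
Proof.
move=> aE_a h; rewrite Defs.compA power_liftE; case: pickP => [j _|_].
  exact: aE_a.
rewrite -Defs.compA (terminal_morph_eq (cmp (terminal_morph eps_terminal Pm) aE)
  (Defs.idm eps) eps_terminal).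
exact: comp_id_r.
Qed.

Lemma spreadE x j : (Umap spread x).[phi (e' j)] = Umap (projm j) x.
Proof.
rewrite -Umap_comp power_liftE.
by case: pickP => [k /eqP/phi_e'_inj -> // | /(_ j)]; rewrite eqxx.
Qed.

Lemma sigma_CA_C : CA_C a sigma.
Proof.
have [s [sK sE]] := Hopfian_section_morph Q_Hopfian sigmaHK.
exists E', e', Pm, projm, (cmp (projQ 1%g) (cmp s spread)); split=> //.
- move=> aE aE_a.
  have s_aQ : cmp s (cmp spread aE) = cmp spread aE.
    by rewrite -{1}(tauH_pointed (spread_pointed aE_a)) Defs.compA sK comp_id_l.
  by rewrite -!Defs.compA s_aQ spread_pointed.
- move=> c g x x_c; rewrite sigma_local !Umap_comp sE power_pointE.
  congr nu; apply: functional_extensionality => j.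
  by rewrite mul1g spreadE x_c.
Qed.

End InverseLocalRule.

Theorem theorem6p1 (G : Grp) (C : concrete_category) (eps : Ob C) (A : Ob C)
    (a : Hom eps A) (tau sigma : (G -> U A) -> (G -> U A)) :
  LEF G ->
  is_terminal eps ->
  has_fibered_products C ->
  preserves_finite_powers C ->
  finite_product_Hopfian A ->
  CA_C a tau ->
  (* tau is reversible: bijective with inverse sigma, and sigma is a cellular automaton *)
  (forall c, sigma (tau c) = c) ->
  (forall c, tau (sigma c) = c) ->
  is_CA sigma ->
  CA_C a sigma.
Proof.
move=> G_LEF eps_terminal pullback pres A_Hopfian
  [E [e [P [proj [f [_ powP f_pointed tau_local]]]]]] _ sigmaK
  [E' [e' [nu [e'_inj sigma_local]]]].
have [H [phi [phi1 phiM phi_e'_inj]]] := LEF_local_morph e G_LEF e'_inj.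
have [Q [projQ powQ]] := power_exists a H eps_terminal pullback.
have [Pm [projm powPm]] := power_exists a E' eps_terminal pullback.
exact: (sigma_CA_C eps_terminal pres sigmaK powP f_pointed tau_local
  e'_inj sigma_local phi1 phiM phi_e'_inj
  powQ (finite_product_Hopfian_power A_Hopfian powQ) powPm).
Qed.
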